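(* Let $T$ be a countable tree without leaves (vertices of infinite degree allowed) with root $o$, $P=(p(x,y))$ a stochastic nearest-neighbour transition matrix on $T$, and $\lambda\in\mathbb C$. Suppose the oriented edges carry $\lambda$-weights $f(x,y)$ satisfying for every vertex $x$ and neighbour $y$: (i) $f(x,y)f(y,x)\ne1$; (ii) $u(x,x)=\sum_{v\sim x}p(x,v)f(v,x)$ converges absolutely and $u(x,x)\ne\lambda$; (iii) $\lambda f(x,y)=p(x,y)+(u(x,x)-p(x,y)f(y,x))f(x,y)$; extend $f$ by $f(x,x)=1$ and multiplicatively along geodesics, and let $k(x,w)=f(x,x\wedge w)/f(o,x\wedge w)$. Then a function $h:T\to\mathbb C$ satisfies $Ph=\lambda h$ (i.e. $\sum_{y\sim x}p(x,y)h(y)$ converges absolutely and equals $\lambda h(x)$ for all $x$) if and only if it is of the form $h(x)=\int_{\partial T}k(x,\xi)\,d\nu(\xi)$ for a strong complex distribution $\nu$ on $\partial T$. The distribution $\nu$ is determined by $h$: $\nu=\nu^h$, where $$\nu^h(\partial T)=h(o),\qquad \nu^h(\partial T_x)=f(o,x)\,\frac{h(x)-f(x,x^-)h(x^-)}{1-f(x^-,x)f(x,x^-)}\quad (x\ne o).$$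
   Context: Nearest-neighbour stochastic: $p(x,y)>0$ iff $x\sim y$, rows sum to $1$. $\pi(x,y)$ is the geodesic from $x$ to $y$. Ends: equivalence classes of rays (non-backtracking infinite paths, equivalent if they differ by finitely many initial vertices); $\partial T$ is the set of ends. $T_x$ is the subtree spanned by all $w$ with $x\in\pi(o,w)$; $\partial T_x$ the set of ends with a representative ray in $T_x$; $\partial T_o=\partial T$. For $x\ne o$, $x^-$ is the neighbour of $x$ on $\pi(o,x)$. The confluent $v\wedge w$ is the last common element of $\pi(o,v)$ and $\pi(o,w)$. A distribution on $\partial T$ is a complex finitely additive set function on the algebra of finite disjoint unions of sets $\partial T_x\setminus\bigcup_{y\in S}\partial T_y$ ($S$ a finite set of vertices $y$ with $y^-=x$); integrals of locally constant functions $\varphi=\sum c_i\mathbf 1_{A_i}$ (disjoint $A_i$ in this algebra) are $\sum c_i\nu(A_i)$. It is strong if for each $x$, $\sum_{y:y^-=x}\nu(\partial T_y)$ converges absolutely (to $\nu(\partial T_x)$). For each $x$, $\xi\mapsto k(x,\xi)$ is locally constant. *)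

From HB Require Import structures.
From mathcomp Require Import all_boot all_order all_algebra.
From mathcomp Require Import all_classical all_reals all_analysis.
From mathcomp Require Import complex.
Set Implicit Arguments. Unset Strict Implicit. Unset Printing Implicit Defensive.
Import Order.TTheory GRing.Theory Num.Theory.
Import numFieldNormedType.Exports.
Local Open Scope classical_set_scope.
Local Open Scope ring_scope.

(* A countable rooted tree, given by its troot o and the parent map     *)
(* x |-> x^- (with o^- := o by convention).  Every vertex reaches the   *)
(* troot after finitely many steps; x ~ y iff one is the parent of the  *)
(* other.  This is exactly a (connected, acyclic) tree rooted at o.     *)
Record rtree := RTree {
  vert :> countType;
  troot : vert;
  par : vert -> vert;
  par_root : par troot = troot;
  par_fin : forall x, exists n, iter n par x == troot
}.

Section Tree.
Variable T : rtree.
Local Notation o := (troot T).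
Local Notation par := (@par T).

Definition adj (x y : T) : bool :=
  ((x != o) && (par x == y)) || ((y != o) && (par y == x)).
Definition child (x y : T) : bool := (y != o) && (par y == x).

Definition no_leaves : Prop :=
  forall x : T, exists y z : T, [/\ y != z, adj x y & adj x z].

Definition depth (x : T) : nat := ex_minn (par_fin x).

Definition anc (a w : T) : bool :=
  (depth a <= depth w)%N && (iter (depth w - depth a)%N par w == a).

(* the confluent x /\ w : last common vertex of pi(o,x) and pi(o,w) *)
Definition confl (x w : T) : T :=
  iter (find (fun i => anc (iter i par x) w) (iota 0 (depth x).+1)) par x.

(* ends: each end has a unique representative ray starting at o;
   we represent the end by that ray (o = r 0, r (n+1) a child of r n) *)
Definition is_ray (r : nat -> T) : Prop :=
  r 0 = o /\ forall n, child (r n) (r n.+1).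
Definition ends := {r : nat -> T | is_ray r}.

Definition bd (x : T) : set ends := [set e | exists n, sval e n = x].

(* x /\ xi for an end xi : last vertex of pi(o,x) lying on the ray of xi *)
Definition confl_end (x : T) (e : ends) : T :=
  iter (find (fun i => sval e (depth (iter i par x)) == iter i par x)
             (iota 0 (depth x).+1)) par x.

(* absolutely convergent sums over the vertices y with r x y, using the
   enumeration of the countable vertex set (order-independent by absolute
   convergence):  "sum_{y : r x y} g y converges absolutely to s" *)
Definition rterm (K : zmodType) (r : rel T) (x : T) (g : T -> K) (n : nat) : K :=
  if @pickle_inv T n is Some y then (if r x y then g y else 0) else 0.
Definition abs_sum (K : numFieldType) (r : rel T) (x : T) (g : T -> K) (s : K)
  : Prop :=
  cvgn (series (fun n => `|rterm r x g n|)) /\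
  series (rterm r x g) @ \oo --> s.

Definition nn_stochastic (R : realType) (p : T -> T -> R) : Prop :=
  (forall x y, 0 <= p x y) /\ (forall x y, (0 < p x y) = adj x y) /\
  (forall x, abs_sum adj x (p x) 1).

Definition eigenfun (R : realType) (p : T -> T -> R) (lam : R[i])
  (h : T -> R[i]) : Prop :=
  forall x, abs_sum adj x (fun y => (p x y)%:C%C * h y) (lam * h x).

Definition fext (R : realType) (f : T -> T -> R[i]) (x w : T) : R[i] :=
  let c := confl x w in
  (\prod_(i < (depth x - depth c)%N) f (iter i par x) (iter i.+1 par x)) *
  (\prod_(i < (depth w - depth c)%N) f (iter i.+1 par w) (iter i par w)).

Definition kend (R : realType) (f : T -> T -> R[i]) (x : T) (e : ends) : R[i] :=
  fext f x (confl_end x e) / fext f o (confl_end x e).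

(* the algebra of finite disjoint unions of the sets
   \partial T_x \ U_{y in S} \partial T_y, S a finite set of children of x *)
Definition basic (x : T) (S : seq T) : set ends :=
  [set e | bd x e /\ forall y, y \in S -> ~ bd y e].

Definition in_alg (A : set ends) : Prop :=
  exists l : seq (T * seq T),
    [/\ forall a, a \in l -> all (child a.1) a.2,
        forall i j, (i < j < size l)%N ->
          basic (nth (o, [::]) l i).1 (nth (o, [::]) l i).2 `&`
          basic (nth (o, [::]) l j).1 (nth (o, [::]) l j).2 = set0
      & A = \bigcup_(a in [set a | a \in l]) basic a.1 a.2].

Definition distribution (R : realType) (nu : set ends -> R[i]) : Prop :=
  forall A B, in_alg A -> in_alg B -> A `&` B = set0 ->
    nu (A `|` B) = nu A + nu B.

Definition strong_distribution (R : realType) (nu : set ends -> R[i]) : Prop :=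
  distribution nu /\ forall x, abs_sum child x (fun y => nu (bd y)) (nu (bd x)).

(* I = int phi dnu, for phi = sum_i c_i 1_{A_i} locally constant
   (A_i disjoint sets of the algebra) *)
Definition lc_integral (R : realType) (nu : set ends -> R[i])
  (phi : ends -> R[i]) (I : R[i]) : Prop :=
  exists l : seq (R[i] * set ends),
    [/\ forall a, a \in l -> in_alg a.2,
        forall i j, (i < j < size l)%N ->
          (nth (0, set0) l i).2 `&` (nth (0, set0) l j).2 = set0,
        forall e, phi e = \sum_(a <- l) a.1 * (e \in a.2)%:R
      & I = \sum_(a <- l) a.1 * nu a.2].

Definition nuh (R : realType) (f : T -> T -> R[i]) (h : T -> R[i]) (x : T)
  : R[i] :=
  fext f o x * ((h x - f x (par x) * h (par x)) /
                (1 - f (par x) x * f x (par x))).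

End Tree.

From Pilot Require Import Defs.
From HB Require Import structures.
From mathcomp Require Import all_boot all_order all_algebra.
From mathcomp Require Import all_classical all_reals all_analysis.
From mathcomp Require Import complex.
From mathcomp Require Import ring.
Import Order.TTheory GRing.Theory Num.Theory.
Import numFieldNormedType.Exports.
Local Open Scope classical_set_scope.
Local Open Scope ring_scope.
Set Implicit Arguments. Unset Strict Implicit. Unset Printing Implicit Defensive.

(* Write N(w) for nu(dT_w).  A distribution is the same thing as a vertex
   function N that is additive over the children of every vertex, and
   every set of the algebra is a finite signed combination of sets dT_w.
   The kernel is such a combination too: off dT_x one has
   k(x, xi) = f(x, x^-) k(x^-, xi), and on dT_x it is 1 / f(o, x).  Hence
   int k(x, .) dnu is an explicit finite sum of values N(w), w on pi(o, x);
   it does not depend on the decomposition, since a combination of the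
   indicators of the sets dT_w that vanishes pairs to 0 with every additive
   N.  Equating this sum with h(x) and subtracting the equation at x^-
   forces N = nu^h, which gives uniqueness; conversely N := nu^h always
   defines a distribution integrating k(x, .) to h(x).  Finally (iii)
   yields, for every child y of x,
     (lam - u(x,x)) nu^h(dT_y) = f(o,x) p(x,y) (h(y) - f(y,x) h(x)),
   so the series defining (Ph)(x) and u(x,x) control sum_y nu^h(dT_y):
   Ph = lam h holds exactly when nu^h is strong. *)

Lemma find_iota_eq (a : pred nat) m j : (j < m)%N -> a j ->
  (forall i, (i < j)%N -> ~~ a i) -> find a (iota 0 m) = j.
Proof.
move=> jm aj nb.
have hs : has a (iota 0 m) by apply/hasP; exists j => //; rewrite mem_iota.
have fs : (find a (iota 0 m) < m)%N by move: hs; rewrite has_find size_iota.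
case: (ltngtP (find a (iota 0 m)) j) => // H.
- have := nth_find 0%N hs; rewrite nth_iota // add0n.
  by move: (nb _ H) => /negbTE ->.
- have := before_find 0%N H; rewrite nth_iota ?(ltn_trans H) // add0n.
  by rewrite aj.
Qed.

Lemma least_uniq (Q : nat -> Prop) a b : Q a -> (forall j, (j < a)%N -> ~ Q j) ->
  Q b -> (forall j, (j < b)%N -> ~ Q j) -> a = b.
Proof.
move=> Qa na Qb nb; case: (ltngtP a b) => // H.
- by case: (nb _ H).
- by case: (na _ H).
Qed.

Lemma seq_argmax (A : eqType) (g : A -> nat) (s : seq A) : s != [::] ->
  exists2 a, a \in s & forall b, b \in s -> (g b <= g a)%N.
Proof.
elim: s => // x s IH _; case: (eqVneq s [::]) => [->|ne].
  by exists x; rewrite ?mem_seq1 // => b; rewrite mem_seq1 => /eqP ->.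
have [a as_ amax] := IH ne.
case: (leqP (g a) (g x)) => H.
  exists x; first by rewrite in_cons eqxx.
  by move=> b; rewrite in_cons => /orP [/eqP ->//|/amax/leq_trans]; apply.
exists a; first by rewrite in_cons as_ orbT.
by move=> b; rewrite in_cons => /orP [/eqP ->|/amax //]; exact: ltnW.
Qed.

Lemma pickle_invE (T : countType) (n : nat) (y : T) : pickle_inv n = Some y -> pickle y = n.
Proof. by move=> H; have := @pickle_invK T n; rewrite H. Qed.

Lemma sum_if_eq (A : eqType) (K : zmodType) (G : A -> K) (cs : seq A) x :
  uniq cs -> \sum_(c <- cs) (if x == c then G c else 0) = if x \in cs then G x else 0.
Proof.
elim: cs => [|c cs IH]; first by rewrite big_nil.
rewrite /= big_cons in_cons => /andP [ncs ucs]; rewrite IH //.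
case: (eqVneq x c) => [->|xc] /=; first by rewrite (negbTE ncs) addr0.
by rewrite add0r.
Qed.

Section TreeBasics.
Variable T : rtree.
Local Notation o := (troot T).
Local Notation par := (@par T).

Lemma iter_par_root n : iter n par o = o.
Proof. by elim: n => //= n ->; rewrite par_root. Qed.

Lemma depthP (x : T) : iter (depth x) par x = o.
Proof. by rewrite /depth; case: ex_minnP => n /eqP. Qed.

Lemma depth_min (x : T) n : iter n par x = o -> (depth x <= n)%N.
Proof. by rewrite /depth; case: ex_minnP => m _ H E; apply: H; apply/eqP. Qed.

Lemma depth_root : depth o = 0%N.
Proof. by apply/eqP; rewrite -leqn0; apply: depth_min. Qed.

Lemma depth_eq0 (x : T) : depth x = 0%N -> x = o.
Proof. by move=> H; have := depthP x; rewrite H. Qed.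

Lemma depth_par (x : T) : x != o -> depth x = (depth (par x)).+1.
Proof.
move=> xo; have := depthP x; case E: (depth x) => [|m] H.
  by rewrite /= in H; rewrite H eqxx in xo.
apply/eqP; rewrite eqn_leq; apply/andP; split.
  by rewrite -E; apply: depth_min; rewrite iterSr depthP.
by rewrite ltnS; apply: depth_min; rewrite -iterSr.
Qed.

Lemma depth_iter (x : T) i : (i <= depth x)%N -> depth (iter i par x) = (depth x - i)%N.
Proof.
elim: i => [|i IH] Hi; first by rewrite subn0.
have IH' := IH (ltnW Hi).
have ne : iter i par x != o.
  apply/eqP => E; move: IH'; rewrite E depth_root => /esym/eqP; rewrite subn_eq0.
  by rewrite leqNgt Hi.
rewrite iterS; move: (depth_par ne); rewrite IH' => E.
by apply/eqP; rewrite -(eqn_add2r 1) !addn1 -E subnSK.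
Qed.

Lemma depth_ind (P : T -> Prop) : P o -> (forall x, x != o -> P (par x) -> P x) ->
  forall x, P x.
Proof.
move=> P0 PS x; move: {2}(depth x) (erefl (depth x)) => n.
elim: n x => [|n IH] x dx; first by rewrite (depth_eq0 dx).
have xo : x != o by apply/eqP => E; rewrite E depth_root in dx.
by apply: PS => //; apply: IH; move: dx; rewrite (depth_par xo); case.
Qed.

Lemma child_depth (x y : T) : child x y -> depth y = (depth x).+1.
Proof. by case/andP => yo /eqP <-; apply: depth_par. Qed.

Lemma child_par (x y : T) : child x y -> par y = x.
Proof. by case/andP => _ /eqP. Qed.

Lemma par_child_neq (v y : T) : v != o -> child v y -> par v != y.
Proof.
move=> vo cy; apply/eqP => E; have := depth_par vo.
by rewrite E (child_depth cy) => /eqP; rewrite -addn2 -{1}[depth v]addn0 eqn_add2l.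
Qed.

Lemma adjE (x y : T) : adj x y = ((x != o) && (par x == y)) || child x y.
Proof. by []. Qed.

Lemma adj_parl (x : T) : x != o -> adj (par x) x.
Proof. by move=> xo; rewrite /adj xo eqxx orbT. Qed.

Lemma adj_parr (x : T) : x != o -> adj x (par x).
Proof. by move=> xo; rewrite /adj xo eqxx. Qed.

Lemma ray_depth (r : nat -> T) : is_ray r -> forall n, depth (r n) = n.
Proof.
case=> r0 rc; elim=> [|n IH]; first by rewrite r0 depth_root.
by rewrite (child_depth (rc n)) IH.
Qed.

Lemma ray_par (r : nat -> T) : is_ray r -> forall n, par (r n.+1) = r n.
Proof. by case=> _ rc n; apply: child_par. Qed.

Lemma ray_iter (r : nat -> T) : is_ray r -> forall k n, (k <= n)%N ->
  iter (n - k) par (r n) = r k.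
Proof.
move=> rr k n; elim: n => [|n IH]; first by rewrite leqn0 => /eqP ->.
rewrite leq_eqVlt => /orP [/eqP ->|]; first by rewrite subnn.
by rewrite ltnS => kn; rewrite subSn // iterSr (ray_par rr); exact: IH.
Qed.

Lemma bdE (w : T) (e : ends T) : bd w e <-> sval e (depth w) = w.
Proof.
split; last by move=> H; exists (depth w).
by case=> n H; have := ray_depth (svalP e) n; rewrite H => ->.
Qed.

Lemma bd_root (e : ends T) : bd o e.
Proof. by exists 0%N; case: (svalP e). Qed.

Lemma bd_rootT : bd o = setT.
Proof. by apply/seteqP; split => e // _; exact: bd_root. Qed.

Lemma bd_par (x : T) (e : ends T) : bd x e -> bd (par x) e.
Proof.
case: (eqVneq x o) => [->|xo]; first by rewrite par_root.
move=> /bdE H; apply/bdE.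
by rewrite -(ray_par (svalP e)) -(depth_par xo) H.
Qed.

Lemma bd_agree_above (u v : T) (e1 e2 : ends T) : bd v e1 -> bd v e2 ->
  (depth u <= depth v)%N -> (bd u e1 <-> bd u e2).
Proof.
move=> /bdE H1 /bdE H2 duv.
have E1 := ray_iter (svalP e1) duv; have E2 := ray_iter (svalP e2) duv.
rewrite H1 in E1; rewrite H2 in E2.
by split => /bdE H; apply/bdE; [rewrite -E2 E1 | rewrite -E1 E2].
Qed.

Lemma bd_child_uniq (v c c' : T) (e : ends T) : child v c -> child v c' ->
  bd c e -> bd c' e -> c = c'.
Proof.
move=> h h' /bdE H /bdE H'.
by rewrite -H -H' (child_depth h) (child_depth h').
Qed.

Lemma bd_child_exists (v : T) (e : ends T) : bd v e -> exists c, child v c /\ bd c e.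
Proof.
move=> /bdE H; exists (sval e (depth v).+1); split.
  by rewrite -{1}H; case: (svalP e).
by exists (depth v).+1.
Qed.

Hypothesis nl : no_leaves T.

Lemma ex_child (x : T) : exists y, child x y.
Proof.
have [y [z [yz axy axz]]] := nl x.
move: axy axz; rewrite !adjE.
case/orP => [/andP [_ /eqP py]|]; last by exists y.
case/orP => [/andP [_ /eqP pz]|]; last by exists z.
by move: yz; rewrite -py -pz eqxx.
Qed.

Definition some_child (x : T) : T := xchoose (ex_child x).

Lemma some_childP x : child x (some_child x).
Proof. exact: xchooseP. Qed.

Definition ray_through (w : T) (n : nat) : T :=
  if (n <= depth w)%N then iter (depth w - n) par w
  else iter (n - depth w) some_child w.

Lemma ray_throughP (w : T) : is_ray (ray_through w).
Proof.
split; first by rewrite /ray_through leq0n subn0 depthP.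
move=> n; rewrite /ray_through.
case: (ltngtP n (depth w)) => H.
- rewrite -(subnSK H) iterS.
  have ne : iter (depth w - n.+1) par w != o.
    apply/eqP => /(f_equal (@depth T)); rewrite depth_iter ?leq_subr // depth_root.
    by rewrite subKn.
  by rewrite /child ne eqxx.
- by rewrite subSn ?(ltnW H) // iterS some_childP.
- by rewrite H subnn subSn // subnn /= some_childP.
Qed.

Lemma ex_end (w : T) : exists e : ends T, bd w e.
Proof.
exists (exist _ _ (ray_throughP w)); exists (depth w).
by rewrite /= /ray_through leqnn subnn.
Qed.

End TreeBasics.

Section Kernel.
Variable T : rtree.
Local Notation o := (troot T).
Local Notation par := (@par T).

Lemma confl_endP (x : T) (e : ends T) : exists i,
  [/\ (i <= depth x)%N, confl_end x e = iter i par x, bd (iter i par x) e &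
      forall j, (j < i)%N -> ~ bd (iter j par x) e].
Proof.
set P := (fun i => sval e (depth (iter i par x)) == iter i par x).
have PE i : P i = `[< bd (iter i par x) e >].
  by apply/idP/idP => [/eqP/bdE/asboolP | /asboolP/bdE/eqP].
have hs : has P (iota 0 (depth x).+1).
  apply/hasP; exists (depth x); first by rewrite mem_iota add0n ltnS leqnn.
  by rewrite PE depthP; apply/asboolP; exact: bd_root.
set i := find P (iota 0 (depth x).+1).
have fs : (i < (depth x).+1)%N by move: hs; rewrite has_find size_iota.
exists i; split => //.
- by have := nth_find 0%N hs; rewrite nth_iota // add0n PE => /asboolP.
- move=> j ji; have := before_find 0%N ji; rewrite nth_iota ?(ltn_trans ji) //.
  by rewrite add0n PE => /negbT/asboolPn.
Qed.

Lemma confl_end_in (x : T) (e : ends T) : bd x e -> confl_end x e = x.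
Proof.
move=> H; have [[|i] [_ -> _ nb]] := confl_endP x e => //.
by case: (nb 0%N).
Qed.

Lemma confl_end_out (x : T) (e : ends T) : x != o -> ~ bd x e ->
  confl_end x e = confl_end (par x) e.
Proof.
move=> xo H; have [[|i] [_ -> bi nb]] := confl_endP x e => //.
have [i' [_ -> bi' nb']] := confl_endP (par x) e.
rewrite iterSr in bi *; congr iter.
apply: (least_uniq (Q := fun k => bd (iter k par (par x)) e)) => // j ji.
by rewrite -iterSr; apply: nb.
Qed.

Lemma confl_end_anc (x : T) (e : ends T) :
  exists2 i, (i <= depth x)%N & confl_end x e = iter i par x.
Proof. by have [i [? ? _ _]] := confl_endP x e; exists i. Qed.

Lemma confl_end_root (e : ends T) : confl_end o e = o.
Proof. by rewrite /confl_end iter_par_root. Qed.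

Lemma confl_anc (y : T) j : (j <= depth y)%N -> confl y (iter j par y) = iter j par y.
Proof.
move=> jy; rewrite /confl; congr iter.
apply: find_iota_eq => //; first by rewrite /anc leqnn subnn eqxx.
move=> i ij; rewrite /anc !depth_iter ?(leq_trans (ltnW ij)) //.
by rewrite leq_sub2lE ?(leq_trans (ltnW ij)) // leqNgt ij.
Qed.

Variable R : realType.
Variable f : T -> T -> R[i].

Lemma fext_anc (y : T) j : (j <= depth y)%N ->
  fext f y (iter j par y) = \prod_(i < j) f (iter i par y) (iter i.+1 par y).
Proof.
by move=> jy; rewrite /fext confl_anc // depth_iter // subKn // subnn big_ord0 mulr1.
Qed.

Lemma fext_self (y : T) : fext f y y = 1.
Proof. by have := fext_anc (y := y) (leq0n _); rewrite big_ord0. Qed.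

Lemma fext_root_par (x : T) : x != o -> fext f o x = fext f o (par x) * f (par x) x.
Proof.
have fext_root w : fext f o w = \prod_(i < depth w) f (iter i.+1 par w) (iter i par w).
  by rewrite /fext /confl iter_par_root depth_root subnn big_ord0 mul1r subn0.
move=> xo; rewrite !fext_root (depth_par xo) big_ord_recl /= mulrC.
by congr (_ * _); apply: eq_bigr => i _; rewrite add0n -iterSr.
Qed.

Lemma fext_par_anc (x : T) i : (i <= depth (par x))%N -> x != o ->
  fext f x (iter i par (par x)) = f x (par x) * fext f (par x) (iter i par (par x)).
Proof.
move=> ip xo; have E : iter i par (par x) = iter i.+1 par x by rewrite iterSr.
rewrite {1}E (@fext_anc x i.+1); last by rewrite (depth_par xo).
rewrite fext_anc // big_ord_recl /=; congr (_ * _).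
by apply: eq_bigr => k _; rewrite add0n -iterSr.
Qed.

Lemma kend_root (e : ends T) : kend f o e = 1.
Proof. by rewrite /kend confl_end_root fext_self divr1. Qed.

Lemma kend_in (x : T) (e : ends T) : bd x e -> kend f x e = (fext f o x)^-1.
Proof. by move=> H; rewrite /kend confl_end_in // fext_self div1r. Qed.

Lemma kend_out (x : T) (e : ends T) : x != o -> ~ bd x e ->
  kend f x e = f x (par x) * kend f (par x) e.
Proof.
move=> xo H; rewrite /kend (confl_end_out xo H).
have [i ip ->] := confl_end_anc (par x) e.
by rewrite fext_par_anc // mulrA.
Qed.

End Kernel.

Section Combinations.
Variable T : rtree.
Local Notation o := (troot T).
Local Notation par := (@par T).
Variable K : numFieldType.

Definition comb_eval (d : seq (T * K)) (e : ends T) : K :=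
  \sum_(a <- d) a.2 * \1_(bd a.1) e.
Definition comb_pair (d : seq (T * K)) (N : T -> K) : K := \sum_(a <- d) a.2 * N a.1.
Definition comb_coef (d : seq (T * K)) (u : T) : K := \sum_(a <- d) a.2 * (a.1 == u)%:R.
Definition comb_mass (d : seq (T * K)) : nat := (\sum_(a <- d) 2 ^ depth a.1)%N.

(* Vertices with infinitely many children impose no condition. *)
Definition child_additive (N : T -> K) : Prop := forall (v : T) (cs : seq T),
  uniq cs -> (forall c, (c \in cs) = child v c) -> N v = \sum_(c <- cs) N c.

Lemma indic_in (A : set (ends T)) e : A e -> \1_A e = 1 :> K.
Proof. by move=> H; rewrite indicE mem_set. Qed.

Lemma indic_notin (A : set (ends T)) e : ~ A e -> \1_A e = 0 :> K.
Proof. by move=> H; rewrite indicE memNset. Qed.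

Lemma indicU_disjoint (A B : set (ends T)) e : A `&` B = set0 ->
  \1_(A `|` B) e = \1_A e + \1_B e :> K.
Proof.
move=> AB; case: (pselect (A e)) => Ha.
  have Hb : ~ B e.
    move=> Hb; have : (A `&` B) e by split.
    by rewrite AB.
  by rewrite (indic_in (_ : (A `|` B) e)) ?(indic_in Ha) ?(indic_notin Hb) ?addr0 //; left.
case: (pselect (B e)) => Hb.
  by rewrite (indic_in (_ : (A `|` B) e)) ?(indic_notin Ha) ?(indic_in Hb) ?add0r //; right.
by rewrite !indic_notin ?addr0 //; case.
Qed.

Lemma indic_bd_eq (u w : T) e : bd u e -> depth w = depth u ->
  \1_(bd w) e = (w == u)%:R :> K.
Proof.
move=> /bdE Hu dw; case: (eqVneq w u) => [->|wu]; first by rewrite indic_in //; apply/bdE.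
by rewrite indic_notin // => /bdE; rewrite dw Hu => E; rewrite E eqxx in wu.
Qed.

Lemma comb_eval_cat (d1 d2 : seq (T * K)) e :
  comb_eval (d1 ++ d2) e = comb_eval d1 e + comb_eval d2 e.
Proof. by rewrite /comb_eval big_cat. Qed.

Lemma comb_pair_cat (d1 d2 : seq (T * K)) N :
  comb_pair (d1 ++ d2) N = comb_pair d1 N + comb_pair d2 N.
Proof. by rewrite /comb_pair big_cat. Qed.

Lemma comb_eval1 (x : T) (k : K) e : comb_eval [:: (x, k)] e = k * \1_(bd x) e.
Proof. by rewrite /comb_eval big_seq1. Qed.

Lemma comb_pair1 (x : T) (k : K) N : comb_pair [:: (x, k)] N = k * N x.
Proof. by rewrite /comb_pair big_seq1. Qed.

Lemma comb_sum_split (d : seq (T * K)) (w : T) (G : T -> K) :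
  \sum_(a <- d) a.2 * G a.1 =
  \sum_(a <- [seq a <- d | a.1 != w]) a.2 * G a.1 + comb_coef d w * G w.
Proof.
rewrite big_filter [LHS](bigID (fun a => a.1 != w)) /=; congr (_ + _).
rewrite /comb_coef big_distrl /= [RHS](bigID (fun a => a.1 != w)) /=.
rewrite [X in _ = X + _]big1 ?add0r; last by move=> a H; rewrite (negbTE H) mulr0 mul0r.
by apply: eq_bigr => a; rewrite negbK => /eqP ->; rewrite eqxx mulr1.
Qed.

Lemma comb_sum_children (d : seq (T * K)) (v : T) (cs : seq T) (G : T -> K) :
  uniq cs -> (forall c, (c \in cs) = child v c) ->
  \sum_(b <- d | child v b.1) b.2 * G b.1 = \sum_(c <- cs) comb_coef d c * G c.
Proof.
move=> ucs mcs; rewrite /comb_coef.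
under [RHS]eq_bigr do rewrite big_distrl /=.
rewrite exchange_big /= big_mkcond /=; apply: eq_bigr => b _.
under eq_bigr do rewrite -mulrA mulr_natl mulrb.
rewrite -big_distrr /= sum_if_eq // mcs.
by case: (child v b.1); rewrite ?mulr0.
Qed.

Lemma sum_children_indic (v : T) (cs : seq T) e : uniq cs ->
  (forall c, (c \in cs) = child v c) ->
  \sum_(c <- cs) \1_(bd c) e = \1_(bd v) e :> K.
Proof.
move=> ucs mcs; case: (pselect (bd v e)) => H.
  have [c0 [cc0 bc0]] := bd_child_exists H.
  rewrite (indic_in H) (eq_big_seq (fun c => if c0 == c then 1 else 0)).
    by rewrite sum_if_eq // mcs cc0.
  move=> c; rewrite mcs => cc; case: (eqVneq c0 c) => [<-|ne]; first by rewrite indic_in.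
  by rewrite indic_notin // => bc; move: ne; rewrite (bd_child_uniq cc0 cc bc0 bc) eqxx.
rewrite indic_notin // big_seq big1 // => c; rewrite mcs => cc.
by rewrite indic_notin // => bc; apply: H; rewrite -(child_par cc); exact: bd_par.
Qed.

(* Two ends through siblings u1, u2 are seen alike by every vertex of d
   that is no deeper than u1, except u1 and u2 themselves. *)
Lemma comb_eval_siblings (d : seq (T * K)) (u1 u2 : T) e1 e2 :
  (forall a, a \in d -> (depth a.1 <= depth u1)%N) -> depth u1 = depth u2 ->
  par u1 = par u2 -> u1 != o -> bd u1 e1 -> bd u2 e2 ->
  comb_eval d e1 - comb_eval d e2 = comb_coef d u1 - comb_coef d u2.
Proof.
move=> Hd d12 p12 u1o b1 b2.
rewrite /comb_eval /comb_coef -!sumrB; apply: eq_big_seq => a ad.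
rewrite -!mulrBr; congr (_ * _).
have := Hd a ad; rewrite leq_eqVlt => /orP [/eqP da|lt].
  by rewrite (indic_bd_eq b1 da) (indic_bd_eq b2 (etrans da d12)).
have ne1 : a.1 != u1 by apply/eqP => E; rewrite E ltnn in lt.
have ne2 : a.1 != u2 by apply/eqP => E; rewrite E -d12 ltnn in lt.
rewrite (negbTE ne1) (negbTE ne2) subrr.
have bp1 := bd_par b1; have bp2 := bd_par b2; rewrite -p12 in bp2.
have dle : (depth a.1 <= depth (par u1))%N by rewrite -ltnS -(depth_par u1o).
have [Hf Hb] := bd_agree_above bp1 bp2 dle.
case: (pselect (bd a.1 e1)) => H1; first by rewrite (indic_in H1) (indic_in (Hf H1)) subrr.
have H2 : ~ bd a.1 e2 by move=> /Hb.
by rewrite (indic_notin H1) (indic_notin H2) subrr.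
Qed.

Section CombPairZero.
Hypothesis nl : no_leaves T.
Variable N : T -> K.
Hypothesis HN : child_additive N.

Section CombReduce.
Variables (d : seq (T * K)) (a : T * K).
Hypotheses (ad : a \in d) (amax : forall b, b \in d -> (depth b.1 <= depth a.1)%N).
Hypotheses (ao : a.1 != o) (Hev : forall e, comb_eval d e = 0).

Lemma comb_coef_sibling c : child (par a.1) c -> comb_coef d c = comb_coef d a.1.
Proof.
move=> cc; have [e_c bc] := ex_end nl c; have [e_w bw] := ex_end nl a.1.
have dc : depth a.1 = depth c by rewrite (child_depth cc) (depth_par ao).
have := comb_eval_siblings amax dc (esym (child_par cc)) ao bw bc.
by rewrite !Hev subrr => /eqP; rewrite eq_sym subr_eq0 eq_sym => /eqP.
Qed.

Lemma comb_reduce_missing c : child (par a.1) c -> ~~ has (fun b => b.1 == c) d ->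
  exists d', [/\ forall e, comb_eval d' e = 0, comb_pair d' N = comb_pair d N
               & (comb_mass d' < comb_mass d)%N].
Proof.
move=> cc nc.
have cw0 : comb_coef d a.1 = 0.
  rewrite -(comb_coef_sibling cc) /comb_coef big_seq big1 // => b bd.
  have : b.1 != c by apply: contra nc => /eqP <-; apply/hasP; exists b.
  by move/negbTE ->; rewrite mulr0.
exists [seq b <- d | b.1 != a.1]; split.
- move=> e; rewrite -(Hev e) /comb_eval.
  by rewrite (comb_sum_split d a.1 (fun u => \1_(bd u) e)) cw0 mul0r addr0.
- by rewrite /comb_pair (comb_sum_split d a.1 N) cw0 mul0r addr0.
- rewrite /comb_mass big_filter [X in (_ < X)%N](bigID (fun b : T * K => b.1 != a.1)).
  rewrite /= -addn1 leq_add2l lt0n sum_nat_seq_eq0; apply/allPn; exists a => //.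
  by rewrite /= eqxx /= expn_eq0.
Qed.

(* If all children of v occur in d, they carry the same coefficient and
   can be merged into v. *)
Lemma comb_reduce_full : (forall c, child (par a.1) c -> has (fun b => b.1 == c) d) ->
  exists d', [/\ forall e, comb_eval d' e = 0, comb_pair d' N = comb_pair d N
               & (comb_mass d' < comb_mass d)%N].
Proof.
set v := par a.1 => allch.
set cs := undup [seq b.1 | b <- d & child v b.1].
have ucs : uniq cs := undup_uniq _.
have mcs c : (c \in cs) = child v c.
  rewrite mem_undup; apply/mapP/idP; first by case=> b; rewrite mem_filter => /andP [cb _] ->.
  move=> cc; have /hasP [b bd /eqP bc] := allch c cc.
  by exists b => //; rewrite mem_filter bc cc bd.
have decomp (G : T -> K) : \sum_(b <- d) b.2 * G b.1 =
    \sum_(b <- [seq b <- d | ~~ child v b.1]) b.2 * G b.1 +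
    comb_coef d a.1 * \sum_(c <- cs) G c.
  rewrite big_filter [LHS](bigID (fun b : T * K => ~~ child v b.1)) /=.
  congr (_ + _); under eq_bigl do rewrite negbK.
  rewrite (comb_sum_children _ _ ucs mcs) big_distrr /=; apply: eq_big_seq => c.
  by rewrite mcs => cc; rewrite comb_coef_sibling.
exists ((v, comb_coef d a.1) :: [seq b <- d | ~~ child v b.1]); split.
- move=> e; rewrite -(Hev e) /comb_eval big_cons /= (decomp (fun u => \1_(bd u) e)).
  by rewrite (sum_children_indic _ ucs mcs) addrC.
- by rewrite /comb_pair big_cons /= (decomp N) -(HN ucs mcs) addrC.
- rewrite /comb_mass big_cons /= big_filter.
  rewrite [X in (_ < X)%N](bigID (fun b : T * K => ~~ child v b.1)) /= addnC ltn_add2l.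
  apply: (@leq_trans (2 ^ depth a.1)); first by rewrite (depth_par ao) ltn_exp2l.
  by rewrite (big_rem _ ad) /= negbK /child ao eqxx leq_addr.
Qed.

End CombReduce.

(* Induction on the mass sum_w 2^(depth w), which both reductions decrease. *)
Lemma comb_pair_eq0 (d : seq (T * K)) : (forall e, comb_eval d e = 0) ->
  comb_pair d N = 0.
Proof.
move: {2}(comb_mass d).+1 (ltnSn (comb_mass d)) => n.
elim: n d => [|n IH] d // Hmass Hev.
case: (eqVneq d [::]) => [->|dne]; first by rewrite /comb_pair big_nil.
have [a ad amax] := seq_argmax (fun a : T * K => depth a.1) dne.
case: (eqVneq a.1 o) => [wo|wo].
  have allo b : b \in d -> b.1 = o.
    by move=> bd; apply: depth_eq0; have := amax b bd; rewrite /= wo depth_root leqn0 => /eqP.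
  have [e _] := ex_end nl o.
  have := Hev e; rewrite /comb_eval (eq_big_seq (fun b => b.2)) => [S0|b bd]; last first.
    by rewrite allo // (indic_in (bd_root e)) mulr1.
  rewrite /comb_pair (eq_big_seq (fun b => b.2 * N o)) => [|b bd]; last by rewrite allo.
  by rewrite -big_distrl /= S0 mul0r.
have [d' [Hev' <- Hmass']] :
    exists d', [/\ forall e, comb_eval d' e = 0, comb_pair d' N = comb_pair d N
                 & (comb_mass d' < comb_mass d)%N].
  case: (pselect (exists c, child (par a.1) c /\ ~~ has (fun b => b.1 == c) d)).
    by case=> c [cc nc]; exact: (comb_reduce_missing ad amax wo Hev cc nc).
  move=> nA; apply: (comb_reduce_full ad amax wo Hev) => c cc.
  by apply/negPn/negP => nh; apply: nA; exists c.
by apply: IH => //; rewrite -ltnS; apply: leq_trans Hmass.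
Qed.

End CombPairZero.

End Combinations.

Section AlgebraCombinations.
Variable T : rtree.
Local Notation o := (troot T).
Variable R : realType.
Local Notation C := (R[i] : numFieldType).

Definition alg_union (l : seq (T * seq T)) : set (ends T) :=
  \bigcup_(a in [set a | a \in l]) basic a.1 a.2.

Definition alg_list (l : seq (T * seq T)) : Prop :=
  (forall a, a \in l -> all (child a.1) a.2) /\
  (forall i j, (i < j < size l)%N ->
     basic (nth (o, [::]) l i).1 (nth (o, [::]) l i).2 `&`
     basic (nth (o, [::]) l j).1 (nth (o, [::]) l j).2 = set0).

Lemma in_algE (A : set (ends T)) : Defs.in_alg A <-> exists l, alg_list l /\ A = alg_union l.
Proof.
split; first by case=> l [H1 H2 H3]; exists l.
by case=> l [[H1 H2] H3]; exists l.
Qed.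

Lemma alg_union_nil : alg_union [::] = set0.
Proof. by apply/seteqP; split => e // [a]. Qed.

Lemma alg_union_cons a l : alg_union (a :: l) = basic a.1 a.2 `|` alg_union l.
Proof.
apply/seteqP; split => e.
  case=> b /=; rewrite in_cons => /orP [/eqP ->|bl] H; first by left.
  by right; exists b.
case=> [H|[b bl H]]; first by exists a => //=; rewrite in_cons eqxx.
by exists b => //=; rewrite in_cons bl orbT.
Qed.

Lemma alg_list_cons a l : alg_list (a :: l) ->
  [/\ alg_list l, all (child a.1) a.2 & basic a.1 a.2 `&` alg_union l = set0].
Proof.
case=> H1 H2; split.
- split; first by move=> b bl; apply: H1; rewrite in_cons bl orbT.
  by move=> i j ij; apply: (H2 i.+1 j.+1).
- by apply: H1; rewrite in_cons eqxx.
- apply/seteqP; split => e // [Ha [b /= bl Hb]].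
  have hi : (0 < (index b l).+1 < size (a :: l))%N by rewrite ltn0Sn /= ltnS index_mem.
  have := H2 _ _ hi; rewrite /= nth_index // => E.
  have : (basic a.1 a.2 `&` basic b.1 b.2) e by split.
  by rewrite E.
Qed.

Lemma in_alg_basic (x : T) (S : seq T) : all (child x) S -> Defs.in_alg (basic x S).
Proof.
move=> H; apply/in_algE; exists [:: (x, S)]; split.
  split; first by move=> a; rewrite mem_seq1 => /eqP ->.
  by move=> i j /andP [ij]; rewrite /= ltnS leqn0 => /eqP jz; rewrite jz in ij.
by rewrite alg_union_cons alg_union_nil setU0.
Qed.

Lemma bd_basic (x : T) : bd x = basic x [::].
Proof. by apply/seteqP; split => e; [move=> H; split|case]. Qed.

Lemma in_alg_bd (x : T) : Defs.in_alg (bd x).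
Proof. by rewrite bd_basic; apply: in_alg_basic. Qed.

Lemma in_alg0 : Defs.in_alg (@set0 (ends T)).
Proof.
apply/in_algE; exists [::]; rewrite alg_union_nil; split => //; split => //.
by move=> i j /andP [_]; rewrite ltn0.
Qed.

Lemma distribution0 (nu : set (ends T) -> C) : Defs.distribution nu -> nu set0 = 0.
Proof.
move=> Hd; have := Hd _ _ in_alg0 in_alg0 (setI0 _).
by rewrite setU0 => /(congr1 (fun z => z - nu set0)); rewrite subrr addrK.
Qed.

Definition comb_rep (A : set (ends T)) (d : seq (T * C)) : Prop :=
  (forall e, comb_eval d e = \1_A e) /\
  (forall nu : set (ends T) -> C, Defs.distribution nu -> nu A = comb_pair d (fun w => nu (bd w))).

Lemma comb_rep_union A B d1 d2 : Defs.in_alg A -> Defs.in_alg B -> A `&` B = set0 ->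
  comb_rep A d1 -> comb_rep B d2 -> comb_rep (A `|` B) (d1 ++ d2).
Proof.
move=> HA HB AB [e1 n1] [e2 n2]; split.
  by move=> e; rewrite comb_eval_cat e1 e2 indicU_disjoint.
by move=> nu Hnu; rewrite comb_pair_cat (Hnu _ _ HA HB AB) -n1 // -n2.
Qed.

Lemma basic_cons (x s : T) (S : seq T) : child x s -> s \notin S ->
  all (child x) S -> basic x S = basic x (s :: S) `|` bd s.
Proof.
move=> cs nS aS; apply/seteqP; split => e.
  case=> bx nb; case: (pselect (bd s e)) => H; first by right.
  by left; split => // y; rewrite in_cons => /orP [/eqP ->//|]; exact: nb.
case=> [[bx nb]|bs].
  by split => // y yS; apply: nb; rewrite in_cons yS orbT.
split; first by rewrite -(child_par cs); exact: bd_par.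
move=> y yS by_; have cy : child x y by move/allP: aS; apply.
by move: nS; rewrite (bd_child_uniq cs cy bs by_) yS.
Qed.

Lemma comb_rep_basic_uniq (x : T) (S : seq T) : uniq S -> all (child x) S ->
  comb_rep (basic x S) ((x, 1) :: [seq (s, -1) | s <- S]).
Proof.
elim: S => [|s S IH] /=.
  move=> _ _; rewrite -bd_basic; split.
    by move=> e; rewrite comb_eval1 mul1r.
  by move=> nu _; rewrite comb_pair1 mul1r.
move=> /andP [nS uS] /andP [cs aS].
have [Hev Hnu] := IH uS aS.
have E := basic_cons cs nS aS.
have disj : basic x (s :: S) `&` bd s = set0.
  by apply/seteqP; split => e // [[_ H] H']; apply: (H s); rewrite ?in_cons ?eqxx.
have a1 : Defs.in_alg (basic x (s :: S)) by apply: in_alg_basic; rewrite /= cs aS.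
split.
  move=> e; have := Hev e; rewrite E indicU_disjoint // /comb_eval !big_cons /= => H.
  by apply: (addIr (\1_(bd s) e)); rewrite -H; ring.
move=> nu Hnu'; have := Hnu nu Hnu'; rewrite E (Hnu' _ _ a1 (in_alg_bd s) disj).
rewrite /comb_pair !big_cons /= => H.
by apply: (addIr (nu (bd s))); rewrite H; ring.
Qed.

Lemma comb_rep_basic (x : T) (S : seq T) : all (child x) S ->
  exists d : seq (T * C), comb_rep (basic x S) d.
Proof.
move=> aS; have -> : basic x S = basic x (undup S).
  apply/seteqP; split => e [H1 H2]; split => // y; first by rewrite mem_undup; apply: H2.
  by move=> yS; apply: H2; rewrite mem_undup.
exists ((x, 1) :: [seq (s, -1) | s <- undup S]).
apply: comb_rep_basic_uniq; first exact: undup_uniq.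
by apply/allP => y; rewrite mem_undup; move/allP: aS; apply.
Qed.

Lemma comb_rep_alg (A : set (ends T)) : Defs.in_alg A -> exists d : seq (T * C), comb_rep A d.
Proof.
move/in_algE => [l [Hl ->]]; elim: l Hl => [|a l IH].
  move=> _; exists [::]; rewrite alg_union_nil; split.
    by move=> e; rewrite /comb_eval big_nil indic_notin.
  by move=> nu Hnu; rewrite distribution0 // /comb_pair big_nil.
move=> /alg_list_cons [Hl Ha Hdisj].
have [d2 H2] := IH Hl; have [d1 H1] := comb_rep_basic Ha.
exists (d1 ++ d2); rewrite alg_union_cons; apply: comb_rep_union => //.
  exact: in_alg_basic.
by apply/in_algE; exists l.
Qed.

Lemma distribution_child_additive (nu : set (ends T) -> C) :
  Defs.distribution nu -> child_additive (fun w => nu (bd w)).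
Proof.
move=> Hnu v cs ucs mcs.
have acs : all (child v) cs by apply/allP => c; rewrite mcs.
have [_ H] := comb_rep_basic_uniq ucs acs.
have E : basic v cs = set0.
  apply/seteqP; split => e // [bv nb].
  by have [c [cc bc]] := bd_child_exists bv; apply: (nb c); rewrite ?mcs.
move: (H nu Hnu); rewrite E distribution0 // /comb_pair big_cons big_map /= mul1r.
move/eqP; rewrite eq_sym addr_eq0 => /eqP ->.
by rewrite -sumrN; apply: eq_bigr => c _; rewrite mulN1r opprK.
Qed.

End AlgebraCombinations.

Section KernelCombination.
Variable T : rtree.
Local Notation o := (troot T).
Local Notation par := (@par T).
Variable R : realType.
Local Notation C := (R[i] : numFieldType).
Variable f : T -> T -> R[i].

Definition kcoef (x : T) : C := (fext f o x)^-1 - f x (par x) * (fext f o (par x))^-1.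

Definition comb_scale (k : C) (d : seq (T * C)) := [seq (a.1, k * a.2) | a <- d].

Fixpoint kcomb_rec (n : nat) (x : T) : seq (T * C) :=
  if n is n'.+1 then comb_scale (f x (par x)) (kcomb_rec n' (par x)) ++ [:: (x, kcoef x)]
  else [:: (x, 1)].

Definition kcomb (x : T) := kcomb_rec (depth x) x.

Lemma comb_eval_scale k d e : comb_eval (comb_scale k d) e = k * comb_eval d e.
Proof. by rewrite /comb_eval big_map big_distrr; apply: eq_bigr => a _ /=; rewrite mulrA. Qed.

Lemma comb_pair_scale k d N : comb_pair (comb_scale k d) N = k * comb_pair d N.
Proof. by rewrite /comb_pair big_map big_distrr; apply: eq_bigr => a _ /=; rewrite mulrA. Qed.

Lemma kcomb_root : kcomb o = [:: (o, 1)].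
Proof. by rewrite /kcomb depth_root. Qed.

Lemma kcomb_par (x : T) : x != o ->
  kcomb x = comb_scale (f x (par x)) (kcomb (par x)) ++ [:: (x, kcoef x)].
Proof. by move=> xo; rewrite /kcomb (depth_par xo). Qed.

Lemma comb_eval_kcomb (x : T) e : comb_eval (kcomb x) e = kend f x e.
Proof.
elim/depth_ind: x => [|x xo IH].
  by rewrite kcomb_root comb_eval1 kend_root (indic_in C (bd_root e)) mulr1.
rewrite kcomb_par // comb_eval_cat comb_eval_scale IH comb_eval1.
case: (pselect (bd x e)) => H; last by rewrite (indic_notin C H) mulr0 addr0 (kend_out _ xo H).
by rewrite (indic_in C H) mulr1 !kend_in //; [rewrite /kcoef; ring | exact: bd_par].
Qed.

Lemma comb_pair_kcomb_root N : comb_pair (kcomb o) N = N o.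
Proof. by rewrite kcomb_root comb_pair1 mul1r. Qed.

Lemma comb_pair_kcomb (x : T) N : x != o ->
  comb_pair (kcomb x) N = f x (par x) * comb_pair (kcomb (par x)) N + kcoef x * N x.
Proof. by move=> xo; rewrite kcomb_par // comb_pair_cat comb_pair_scale comb_pair1. Qed.

Section IntegralValue.
Hypothesis nl : no_leaves T.
Variable N : T -> C.
Hypothesis HN : child_additive N.
Variable nu : set (ends T) -> C.
Hypothesis nu_rep : forall A, Defs.in_alg A ->
  exists d : seq (T * C), (forall e, comb_eval d e = \1_A e) /\ nu A = comb_pair d N.

Lemma comb_of_lc_list (l : seq (C * set (ends T))) :
  (forall a, a \in l -> Defs.in_alg a.2) ->
  exists D : seq (T * C),
    (forall e, comb_eval D e = \sum_(a <- l) a.1 * \1_(a.2) e) /\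
    comb_pair D N = \sum_(a <- l) a.1 * nu a.2.
Proof.
elim: l => [|a l IH] Hl.
  by exists [::]; split => [e|]; rewrite /comb_eval /comb_pair !big_nil.
have [D [H1 H2]] : exists D : seq (T * C),
    (forall e, comb_eval D e = \sum_(a <- l) a.1 * \1_(a.2) e) /\
    comb_pair D N = \sum_(a <- l) a.1 * nu a.2.
  by apply: IH => b bl; apply: Hl; rewrite in_cons bl orbT.
have [d [d1 d2]] := nu_rep (Hl a (mem_head _ _)).
exists (comb_scale a.1 d ++ D); split => [e|].
  by rewrite comb_eval_cat comb_eval_scale d1 H1 big_cons.
by rewrite comb_pair_cat comb_pair_scale -d2 H2 big_cons.
Qed.

Lemma lc_integral_kend (x : T) (I : C) :
  lc_integral nu (kend f x) I -> I = comb_pair (kcomb x) N.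
Proof.
case=> l [Halg _ Hphi HI]; have [D [HD1 HD2]] := comb_of_lc_list Halg.
have Hz e : comb_eval (D ++ comb_scale (-1) (kcomb x)) e = 0.
  rewrite comb_eval_cat comb_eval_scale comb_eval_kcomb HD1.
  have -> : \sum_(a <- l) a.1 * \1_(a.2) e = kend f x e by rewrite Hphi.
  by rewrite mulN1r subrr.
have := comb_pair_eq0 nl HN Hz.
by rewrite comb_pair_cat comb_pair_scale HD2 -HI mulN1r => /eqP; rewrite subr_eq0 => /eqP.
Qed.

End IntegralValue.

(* The tail of kpieces x decomposes the ends outside dT_x according to the
   vertex where they leave pi(o, x). *)
Fixpoint kpieces_rec (n : nat) (x : T) : seq (C * set (ends T)) :=
  if n is n'.+1 then
    (f x (par x) * (fext f o (par x))^-1, basic (par x) [:: x]) ::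
    [seq (f x (par x) * a.1, a.2) | a <- kpieces_rec n' (par x)]
  else [::].

Definition kpieces_out (x : T) := kpieces_rec (depth x) x.

Definition kpieces (x : T) := ((fext f o x)^-1, bd x) :: kpieces_out x.

Definition pairwise_disjoint (l : seq (C * set (ends T))) : Prop :=
  forall i j, (i < j < size l)%N -> (nth (0, set0) l i).2 `&` (nth (0, set0) l j).2 = set0.

Lemma pairwise_disjoint_cons a l : (forall b, b \in l -> a.2 `&` b.2 = set0) ->
  pairwise_disjoint l -> pairwise_disjoint (a :: l).
Proof.
move=> Ha Hl [|i] [|j] //=; first by rewrite ltnS => jl; apply: Ha; apply: mem_nth.
by rewrite !ltnS => H; apply: Hl.
Qed.

Lemma pairwise_disjoint_scale k l : pairwise_disjoint l ->
  pairwise_disjoint [seq (k * a.1, a.2) | a <- l].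
Proof.
move=> H i j /andP [ij]; rewrite size_map => jl.
by rewrite !(nth_map (0, set0)) ?(ltn_trans ij) //=; apply: H; rewrite ij.
Qed.

Lemma kpieces_out_par (x : T) : x != o -> kpieces_out x =
  (f x (par x) * (fext f o (par x))^-1, basic (par x) [:: x]) ::
  [seq (f x (par x) * a.1, a.2) | a <- kpieces_out (par x)].
Proof. by move=> xo; rewrite /kpieces_out (depth_par xo). Qed.

Lemma kpieces_out_root : kpieces_out o = [::].
Proof. by rewrite /kpieces_out depth_root. Qed.

Lemma kpieces_outP (x : T) :
  [/\ forall a, a \in kpieces_out x -> Defs.in_alg a.2,
      forall a, a \in kpieces_out x -> a.2 `&` bd x = set0,
      pairwise_disjoint (kpieces_out x) &
      forall e, \sum_(a <- kpieces_out x) a.1 * \1_(a.2) e =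
                if `[< bd x e >] then 0 else kend f x e].
Proof.
elim/depth_ind: x => [|x xo [IH1 IH2 IH3 IH4]].
  rewrite kpieces_out_root; split => //; first by move=> i j /andP [_]; rewrite ltn0.
  by move=> e; rewrite big_nil (asboolT (bd_root e)).
have cx : child (par x) x by rewrite /child xo eqxx.
have bsub e : basic (par x) [:: x] e -> bd (par x) e by case.
have disj b : b \in kpieces_out (par x) -> b.2 `&` basic (par x) [:: x] = set0.
  move=> bin; apply/seteqP; split => e // [H1 H2].
  have : (b.2 `&` bd (par x)) e by split => //; apply: bsub.
  by rewrite (IH2 b bin).
rewrite kpieces_out_par //; split.
- move=> a; rewrite in_cons => /orP [/eqP -> /=|]; first by apply: in_alg_basic; rewrite /= cx.
  by case/mapP => b bin -> /=; apply: IH1.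
- move=> a; rewrite in_cons => /orP [/eqP -> /=|].
    by apply/seteqP; split => e // [[_ H] bx]; apply: (H x) => //; exact: mem_head.
  case/mapP => b bin -> /=; apply/seteqP; split => e // [H1 H2].
  have : (b.2 `&` bd (par x)) e by split => //; apply: bd_par.
  by rewrite (IH2 b bin).
- apply: pairwise_disjoint_cons; last exact: pairwise_disjoint_scale.
  by move=> b /mapP [c cin ->] /=; rewrite setIC; apply: disj.
- move=> e; rewrite big_cons big_map /=.
  under eq_bigr do rewrite -mulrA.
  rewrite -big_distrr /= IH4.
  case: (pselect (bd x e)) => H.
    rewrite (asboolT H) (asboolT (bd_par H)) mulr0 addr0 (indic_notin C) ?mulr0 //.
    by case=> _ /(_ x (mem_head _ _)).
  rewrite (asboolF H) (kend_out _ xo H); case: (pselect (bd (par x) e)) => H'.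
    rewrite (asboolT H') mulr0 addr0 (indic_in C) ?mulr1 ?(kend_in _ H') //.
    by split => // y; rewrite mem_seq1 => /eqP ->.
  by rewrite (asboolF H') (indic_notin C) ?mulr0 ?add0r // => /bsub.
Qed.

Lemma lc_integral_kpieces (nu : set (ends T) -> C) (x : T) :
  lc_integral nu (kend f x) (\sum_(a <- kpieces x) a.1 * nu a.2).
Proof.
have [H1 H2 H3 H4] := kpieces_outP x.
exists (kpieces x); split => //.
- move=> a; rewrite in_cons => /orP [/eqP -> /=|]; [exact: in_alg_bd | exact: H1].
- by apply: pairwise_disjoint_cons => // b bin; rewrite setIC; exact: H2.
- move=> e; rewrite big_cons /=; under eq_bigr do rewrite -indicE.
  rewrite H4.
  case: (pselect (bd x e)) => H.
    by rewrite (asboolT H) addr0 (kend_in _ H) (mem_set H) mulr1.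
  by rewrite (asboolF H) (memNset H) mulr0 add0r.
Qed.

End KernelCombination.

Section NuhRecursion.
Variable T : rtree.
Local Notation o := (troot T).
Local Notation par := (@par T).
Variable R : realType.
Local Notation C := (R[i] : numFieldType).
Variable f : T -> T -> R[i].
Hypothesis f_neq0 : forall x y : T, adj x y -> f x y != 0.
Hypothesis ff_neq1 : forall x y : T, adj x y -> f x y * f y x != 1.

Lemma fext_root_neq0 (x : T) : fext f o x != 0.
Proof.
elim/depth_ind: x => [|x xo IH]; first by rewrite fext_self oner_eq0.
by rewrite fext_root_par // mulf_neq0 // f_neq0 // adj_parl.
Qed.

Lemma nuh_den_neq0 (x : T) : x != o -> 1 - f (par x) x * f x (par x) != 0.
Proof. by move=> xo; rewrite subr_eq0 eq_sym ff_neq1 // adj_parl. Qed.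

(* Both directions are the identity
     h(x) = f(x, x^-) h(x^-) + kcoef x * N(x),
   solved for N(x) or for h(x). *)
Lemma kcomb_pair_nuh (h N : T -> C) : (forall x, comb_pair (kcomb f x) N = h x) ->
  N o = h o /\ forall x, x != o -> N x = nuh f h x.
Proof.
move=> H; split; first by rewrite -H comb_pair_kcomb_root.
move=> x xo; rewrite /nuh -(H x) -(H (par x)) comb_pair_kcomb // /kcoef fext_root_par //.
have a0 := fext_root_neq0 (par x); have b0 : f (par x) x != 0 by rewrite f_neq0 // adj_parl.
have d0 := nuh_den_neq0 xo.
by field; rewrite d0 a0 b0.
Qed.

Lemma nuh_kcomb_pair (h N : T -> C) : N o = h o ->
  (forall x, x != o -> N x = nuh f h x) -> forall x, comb_pair (kcomb f x) N = h x.
Proof.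
move=> H0 H1; elim/depth_ind => [|x xo IH]; first by rewrite comb_pair_kcomb_root.
rewrite comb_pair_kcomb // IH H1 // /nuh /kcoef fext_root_par //.
have a0 := fext_root_neq0 (par x); have b0 : f (par x) x != 0 by rewrite f_neq0 // adj_parl.
have d0 := nuh_den_neq0 xo.
by field; rewrite d0 a0 b0.
Qed.

Hypothesis nl : no_leaves T.

Lemma lc_integral_nuh (h : T -> C) (nu : set (ends T) -> C) :
  strong_distribution nu -> (forall x, lc_integral nu (kend f x) (h x)) ->
  nu (bd o) = h o /\ forall x, x != o -> nu (bd x) = nuh f h x.
Proof.
case=> Hd _ Hint; apply: kcomb_pair_nuh => x.
have nu_rep A : Defs.in_alg A -> exists d : seq (T * C),
    (forall e, comb_eval d e = \1_A e) /\ nu A = comb_pair d (fun w => nu (bd w)).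
  by move=> HA; have [d [He Hn]] := comb_rep_alg R HA; exists d; split => //; apply: Hn.
by rewrite -(lc_integral_kend nl (distribution_child_additive Hd) nu_rep (Hint x)).
Qed.

End NuhRecursion.

Section AbsSeries.
Variable K : numFieldType.

Definition abs_series (t : nat -> K) (s : K) : Prop :=
  cvgn (series (fun n => `|t n|)) /\ series t @ \oo --> s.

Lemma eq_abs_series (t t' : nat -> K) s s' :
  (forall n, t n = t' n) -> s = s' -> abs_series t s -> abs_series t' s'.
Proof. by move=> /funext -> ->. Qed.

Lemma series_lin a b (t1 t2 : nat -> K) :
  series (fun n => a * t1 n + b * t2 n) = (fun m => a * series t1 m + b * series t2 m).
Proof. by apply: funext => m; rewrite !seriesEnat /= big_split /= -!big_distrr. Qed.

Lemma sum_nat_if_eq m (c : K) k :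
  \sum_(0 <= i < k) (if i == m then c else 0) = if (m < k)%N then c else 0.
Proof. by rewrite -big_mkcond big_nat1_eq. Qed.

Lemma cvg_series_if_eq m (c : K) : series (fun n => if n == m then c else 0) @ \oo --> c.
Proof.
by apply: cvg_near_cst; exists m.+1 => // n /= Hn; rewrite seriesEnat /= sum_nat_if_eq Hn.
Qed.

Lemma abs_series_if_eq m (c : K) : abs_series (fun n => if n == m then c else 0) c.
Proof.
split; last exact: cvg_series_if_eq.
have -> : (fun n => `|(if n == m then c else 0)|) = (fun n => if n == m then `|c| else 0).
  by apply: funext => n; case: (n == m); rewrite ?normr0.
by apply: cvgP; exact: cvg_series_if_eq.
Qed.

Lemma abs_series0 : abs_series (fun _ => 0) 0.
Proof. by apply: eq_abs_series (abs_series_if_eq 0 0) => // n; case: (n == 0)%N. Qed.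

Lemma series_lim_finite (t : nat -> K) s M : series t @ \oo --> s ->
  (forall n, (M <= n)%N -> t n = 0) -> s = \sum_(0 <= n < M) t n.
Proof.
move=> H HM; apply: (norm_cvg_unique H); apply: cvg_near_cst; exists M => // n /= Hn.
rewrite seriesEnat /= (@big_cat_nat _ _ _ M 0 n _ _ (leq0n M) Hn) /= [X in _ + X]big_nat_cond.
by rewrite [X in _ + X = _]big1 ?addr0 // => i /andP [/andP [Mi _] _]; apply: HM.
Qed.

End AbsSeries.

Section ComplexSeries.
Variable R : realType.
Local Notation C := (R[i] : numFieldType).
Local Open Scope complex_scope.

Lemma normc_real (r : R) : `|r%:C| = (`|r|)%:C.
Proof. by rewrite normc_def /= expr0n /= addr0 sqrtr_sqr. Qed.

Lemma norm_Re_le (z : R[i]) : `|complex.Re z| <= complex.Re `|z|.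
Proof.
rewrite normc_def.
have -> : complex.Re (Num.sqrt (complex.Re z ^+ 2 + complex.Im z ^+ 2))%:C =
    Num.sqrt (complex.Re z ^+ 2 + complex.Im z ^+ 2) by [].
by rewrite -sqrtr_sqr ler_wsqrtr // lerDl sqr_ge0.
Qed.

Lemma Re_series (t : nat -> R[i]) m :
  complex.Re (series t m) = series (fun n => complex.Re (t n)) m.
Proof. by rewrite !seriesEnat /= raddf_sum. Qed.

Lemma real_series (t : nat -> R) m :
  (series t m)%:C = series (fun n => (t n)%:C) m :> R[i].
Proof. by rewrite !seriesEnat /= raddf_sum. Qed.

Lemma ge0_complex_real (z : R[i]) : 0 <= z -> z = (complex.Re z)%:C /\ 0 <= complex.Re z.
Proof. by case: z => a b; rewrite lecE /= => /andP [/eqP -> H]; split. Qed.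

(* Comparison test for complex series with nonnegative (hence real) terms,
   through the real parts. *)
Lemma series_le_cvgC (u v : nat -> C) : (forall n, 0 <= u n) ->
  (forall n, u n <= v n) -> cvgn (series v) -> cvgn (series u).
Proof.
move=> u0 uv Hv; set L := lim (series v @ \oo) in Hv.
have Hvr : series (fun n => complex.Re (v n)) @ \oo --> complex.Re L.
  apply/cvgrPdist_lt => eps e0.
  have e0' : (0 : R[i]) < eps%:C by rewrite ltcR.
  move/cvgrPdist_lt: Hv => /(_ _ e0'); apply: filterS => n.
  rewrite -Re_series -raddfB => H; apply: le_lt_trans (norm_Re_le _) _.
  by move: H; rewrite ltcE => /andP [_].
have ur0 n : u n = (complex.Re (u n))%:C /\ 0 <= complex.Re (u n) by apply: ge0_complex_real.
have urv n : complex.Re (u n) <= complex.Re (v n).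
  by move: (uv n); rewrite lecE => /andP [_].
have Hur : cvgn (series (fun n => complex.Re (u n))).
  apply: (@series_le_cvg R _ (fun n => complex.Re (v n))) => [n|n||].
  - by case: (ur0 n).
  - by apply: le_trans (urv n); case: (ur0 n).
  - exact: urv.
  - exact: cvgP Hvr.
set Lr := lim _ in Hur.
have uE : u = (fun n => (complex.Re (u n))%:C) by apply: funext => n; case: (ur0 n).
apply/cvg_ex; exists (Lr%:C); apply/cvgrPdist_lt => eps e0.
have : (0 : R[i]) < eps by [].
rewrite ltcE => /andP [/eqP Ie Re0].
move/cvgrPdist_lt: Hur => /(_ _ Re0); apply: filterS => n H.
rewrite uE -real_series -rmorphB normc_real.
have -> : eps = (complex.Re eps)%:C by move: Ie; clear; case: eps => a b /= ->.
by rewrite ltcR.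
Qed.

Lemma abs_series_lin a b (t1 t2 : nat -> C) s1 s2 :
  abs_series t1 s1 -> abs_series t2 s2 ->
  abs_series (fun n => a * t1 n + b * t2 n) (a * s1 + b * s2).
Proof.
move=> [c1 l1] [c2 l2]; split.
  apply: (series_le_cvgC (v := fun n => `|a| * `|t1 n| + `|b| * `|t2 n|)).
  - by move=> n.
  - by move=> n; rewrite -!normrM ler_normD.
  rewrite series_lin; apply: cvgP; apply: cvgD; apply: cvgMl_tmp; [exact: c1 | exact: c2].
rewrite series_lin; apply: cvgD; apply: cvgMl_tmp; [exact: l1 | exact: l2].
Qed.

End ComplexSeries.

Section RowSums.
Variable T : rtree.
Local Notation o := (troot T).
Local Notation par := (@par T).

Definition parent_term (K : numFieldType) (v : T) (c : K) (n : nat) : K :=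
  if v != o then (if n == pickle (par v) then c else 0) else 0.

Lemma parent_termE (K : numFieldType) (v : T) (c : K) n :
  parent_term v c n = parent_term v 1 n * c.
Proof. by rewrite /parent_term; case: (v != o); case: (n == _); rewrite ?mul1r ?mul0r. Qed.

Lemma abs_series_parent_term (K : numFieldType) (v : T) (c : K) :
  abs_series (parent_term v c) (if v != o then c else 0).
Proof. by rewrite /parent_term; case: (v != o); [exact: abs_series_if_eq | exact: abs_series0]. Qed.

Lemma rterm_adjE (K : numFieldType) (v : T) (g : T -> K) n :
  rterm (@adj T) v g n = rterm (@child T) v g n + parent_term v (g (par v)) n.
Proof.
rewrite /rterm /parent_term; case E: (pickle_inv n) => [y|]; last first.
  rewrite add0r; case: (v != o) => //; case: eqP => // En.
  by move: E; rewrite En pickleK_inv.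
have n_par : (n == pickle (par v)) = (y == par v).
  by rewrite -(pickle_invE E); apply/eqP/eqP => [/(pcan_inj pickleK_inv)|->].
rewrite adjE n_par; case cy: (child v y).
  rewrite orbT; case vo: (v != o); last by rewrite addr0.
  by rewrite eq_sym (negbTE (par_child_neq vo cy)) addr0.
rewrite orbF add0r; case vo: (v != o) => //=.
by case: (eqVneq (par v) y) => [->|ne].
Qed.

(* When v has finitely many children, the row sum over them is a finite sum. *)
Lemma abs_sum_child_additive (K : numFieldType) (N : T -> K) :
  (forall v, abs_sum (@child T) v N (N v)) -> child_additive N.
Proof.
move=> H v cs ucs mcs; have [_ Hs] := H v.
set M := (\max_(c <- cs) (pickle c).+1)%N.
have HM c : c \in cs -> (pickle c < M)%N by move=> cin; rewrite /M (big_rem _ cin) leq_maxl.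
have rt n : rterm (@child T) v N n = \sum_(c <- cs) (if n == pickle c then N c else 0).
  rewrite /rterm; case E: (pickle_inv n) => [y|].
    rewrite -(pickle_invE E) (eq_bigr (fun c => if y == c then N c else 0)).
      by rewrite sum_if_eq // mcs.
    by move=> c _; rewrite (inj_eq (pcan_inj (@pickleK_inv T))).
  rewrite big1 // => c _; case: eqP => // En.
  by move: E; rewrite En pickleK_inv.
rewrite (series_lim_finite (M := M) Hs).
  under eq_bigr => n _ do rewrite rt.
  by rewrite exchange_big /=; apply: eq_big_seq => c cin; rewrite sum_nat_if_eq HM.
move=> n Mn; rewrite rt big_seq big1 // => c cin.
by case: eqP => // En; have := HM c cin; rewrite -En ltnNge Mn.
Qed.

End RowSums.

Section CombDistribution.
Variable T : rtree.
Variable R : realType.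
Local Notation C := (R[i] : numFieldType).
Hypothesis nl : no_leaves T.
Variable N : T -> C.

(* Pairs N with some combination representing A, if there is one; by
   comb_distE the choice does not matter. *)
Definition comb_dist (A : set (ends T)) : C :=
  comb_pair (xget [::] [set d : seq (T * C) | forall e, comb_eval d e = \1_A e]) N.

Hypothesis HN : child_additive N.

Lemma comb_distE A (d : seq (T * C)) : (forall e, comb_eval d e = \1_A e) ->
  comb_dist A = comb_pair d N.
Proof.
move=> Hd; have := xgetI [::] (P := [set d : seq (T * C) | forall e, comb_eval d e = \1_A e]) Hd.
set d0 := xget _ _ => H0; apply/eqP; rewrite -subr_eq0 -mulN1r -comb_pair_scale.
rewrite /comb_dist -/d0 -comb_pair_cat; apply/eqP/(comb_pair_eq0 nl HN) => e.
by rewrite comb_eval_cat comb_eval_scale H0 Hd mulN1r subrr.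
Qed.

Lemma comb_dist_rep A : Defs.in_alg A ->
  exists d : seq (T * C), (forall e, comb_eval d e = \1_A e) /\ comb_dist A = comb_pair d N.
Proof.
move=> HA; have [d [Hd _]] := comb_rep_alg R HA.
by exists d; split => //; apply: comb_distE.
Qed.

Lemma comb_dist_bd y : comb_dist (bd y) = N y.
Proof. by rewrite (@comb_distE _ [:: (y, 1)]) ?comb_pair1 ?mul1r // => e; rewrite comb_eval1 mul1r. Qed.

Lemma comb_dist_distribution : Defs.distribution comb_dist.
Proof.
move=> A B HA HB AB.
have [dA [HdA ->]] := comb_dist_rep HA; have [dB [HdB ->]] := comb_dist_rep HB.
rewrite (@comb_distE _ (dA ++ dB)) ?comb_pair_cat // => e.
by rewrite comb_eval_cat HdA HdB indicU_disjoint.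
Qed.

Lemma lc_integral_comb_dist (f : T -> T -> R[i]) (x : T) :
  lc_integral comb_dist (kend f x) (comb_pair (kcomb f x) N).
Proof.
have Hl := lc_integral_kpieces f comb_dist x.
by rewrite -(lc_integral_kend nl HN comb_dist_rep Hl).
Qed.

End CombDistribution.

Lemma comb_dist_strong (T : rtree) (R : realType) (N : T -> R[i]) :
  no_leaves T -> (forall v, abs_sum (@child T) v N (N v)) -> strong_distribution (comb_dist N).
Proof.
move=> nl HN; have Hadd := abs_sum_child_additive HN.
split; first exact: comb_dist_distribution.
by move=> x; rewrite (comb_dist_bd nl Hadd); under eq_fun do rewrite (comb_dist_bd nl Hadd).
Qed.

Section Eigenfunctions.
Variable T : rtree.
Local Notation o := (troot T).
Local Notation par := (@par T).
Variable R : realType.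
Local Notation C := (R[i] : numFieldType).
Variables (p : T -> T -> R) (lam : R[i]) (f : T -> T -> R[i]) (u : T -> R[i]).
Variable h : T -> R[i].
Hypothesis p_gt0 : forall x y, adj x y -> 0 < p x y.
Hypothesis ff_neq1 : forall x y : T, adj x y -> f x y * f y x != 1.
Hypothesis u_abs_sum : forall x, abs_sum (@adj T) x (fun v => (p x v)%:C%C * f v x) (u x).
Hypothesis u_neq_lam : forall x, u x != lam.
Hypothesis weight_eq : forall x y, adj x y ->
  lam * f x y = (p x y)%:C%C + (u x - (p x y)%:C%C * f y x) * f x y.

Lemma p_neq0 x y : adj x y -> (p x y)%:C%C != 0 :> R[i].
Proof.
move=> a; have := p_gt0 a; rewrite lt_def => /andP [H _].
by apply: contra H => /eqP [->].
Qed.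

Lemma lam_u_neq0 x : lam - u x != 0.
Proof. by rewrite subr_eq0 eq_sym u_neq_lam. Qed.

Lemma edge_den_neq0 x y : adj x y -> 1 - f x y * f y x != 0.
Proof. by move=> a; rewrite subr_eq0 eq_sym ff_neq1. Qed.

Lemma p_mul_edge_den x y : adj x y -> (p x y)%:C%C * (1 - f x y * f y x) = f x y * (lam - u x).
Proof. by move=> a; rewrite [RHS]mulrBr [f x y * lam]mulrC weight_eq //; ring. Qed.

Lemma p_edgeE x y : adj x y -> (p x y)%:C%C = f x y * (lam - u x) / (1 - f x y * f y x).
Proof. by move=> a; rewrite -p_mul_edge_den // mulfK // edge_den_neq0. Qed.

Lemma f_neq0 x y : adj x y -> f x y != 0.
Proof.
move=> a; apply/eqP => E; have := p_mul_edge_den a; rewrite E !mul0r subr0 mulr1.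
by move/eqP; rewrite (negbTE (p_neq0 a)).
Qed.

Lemma nuh_child v y : child v y ->
  (lam - u v) * nuh f h y =
  fext f o v * ((p v y)%:C%C * h y - h v * ((p v y)%:C%C * f y v)).
Proof.
move=> cy; have yo : y != o by case/andP: cy.
have avy : adj v y by rewrite adjE cy orbT.
rewrite /nuh fext_root_par // (child_par cy) (p_edgeE avy).
by have d0 := edge_den_neq0 avy; field; rewrite d0.
Qed.

Lemma nuh_self v : v != o ->
  (lam - u v) * nuh f h v = fext f o v * ((lam - u v) * h v +
     (p v (par v))%:C%C * f (par v) v * h v - (p v (par v))%:C%C * h (par v)).
Proof.
move=> vo; have a1 := adj_parr vo; rewrite /nuh (p_edgeE a1).
by have d1 := edge_den_neq0 a1; field; exact: d1.
Qed.

Definition nuh_bd (y : T) : C := if y == o then h o else nuh f h y.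

(* By nuh_child and nuh_self, the row sum of nuh_bd over the children of v
   is a linear combination of the row sums (P h)(v) and u(v, v), up to the
   single parent term. *)
Lemma eigenfun_strong : eigenfun p lam h -> forall v, abs_sum (@child T) v nuh_bd (nuh_bd v).
Proof.
move=> Heig v.
set a := fext f o v / (lam - u v); set b := - a * h v.
set g1 := fun y => (p v y)%:C%C * h y; set g2 := fun y => (p v y)%:C%C * f y v.
have H1 : abs_series (rterm (@adj T) v g1) (lam * h v) := Heig v.
have H2 : abs_series (rterm (@adj T) v g2) (u v) := u_abs_sum v.
set c := - (a * g1 (par v) + b * g2 (par v)).
have H := abs_series_lin 1 1 (abs_series_lin a b H1 H2) (abs_series_parent_term v c).
have L0 := lam_u_neq0 v; have F0 := fext_root_neq0 f_neq0 v.
apply: (eq_abs_series _ _ H) => [n|].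
  rewrite !mul1r !rterm_adjE (parent_termE v c) (parent_termE v (g1 (par v))).
  rewrite (parent_termE v (g2 (par v))).
  have -> : rterm (@child T) v nuh_bd n =
      a * rterm (@child T) v g1 n + b * rterm (@child T) v g2 n.
    rewrite /rterm; case: (pickle_inv n) => [y|]; last by rewrite !mulr0 addr0.
    case cy: (child v y); last by rewrite !mulr0 addr0.
    have yo : y != o by case/andP: cy.
    rewrite /nuh_bd (negbTE yo); apply: (mulfI L0); rewrite nuh_child // /b /a /g1 /g2.
    by field; rewrite L0.
  by rewrite /c; ring.
rewrite !mul1r /nuh_bd; case: (eqVneq v o) => [E|vo] /=.
  by rewrite /b /a E fext_self; rewrite E in L0; field; rewrite L0.
apply: (mulfI L0); rewrite nuh_self // /c /b /a /g1 /g2.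
by field; rewrite L0.
Qed.

Lemma strong_eigenfun (N : T -> C) : (forall v, abs_sum (@child T) v N (N v)) ->
  N o = h o -> (forall x, x != o -> N x = nuh f h x) -> eigenfun p lam h.
Proof.
move=> HN HN0 HN1 v.
set k := (lam - u v) / fext f o v.
set g1 := fun y => (p v y)%:C%C * h y; set g2 := fun y => (p v y)%:C%C * f y v.
have H2 : abs_series (rterm (@adj T) v g2) (u v) := u_abs_sum v.
set c := g1 (par v) - h v * g2 (par v).
have H := abs_series_lin 1 1 (abs_series_lin (h v) k H2 (HN v)) (abs_series_parent_term v c).
have L0 := lam_u_neq0 v; have F0 := fext_root_neq0 f_neq0 v.
have kE y : k * nuh f h y = (lam - u v) * nuh f h y / fext f o v by rewrite mulrAC.
change (abs_series (rterm (@adj T) v g1) (lam * h v)).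
apply: (eq_abs_series _ _ H) => [n|].
  rewrite !mul1r !rterm_adjE (parent_termE v c) (parent_termE v (g1 (par v))).
  rewrite (parent_termE v (g2 (par v))).
  have -> : rterm (@child T) v g1 n =
      h v * rterm (@child T) v g2 n + k * rterm (@child T) v N n.
    rewrite /rterm; case: (pickle_inv n) => [y|]; last by rewrite !mulr0 addr0.
    case cy: (child v y); last by rewrite !mulr0 addr0.
    have yo : y != o by case/andP: cy.
    by rewrite HN1 // kE nuh_child // /g1 /g2; field; rewrite F0.
  by rewrite /c; ring.
rewrite !mul1r; case: (eqVneq v o) => [E|vo] /=.
  by rewrite /k E HN0 fext_self divr1; ring.
by rewrite HN1 // kE nuh_self // /c /g1 /g2; field; rewrite F0.
Qed.

Hypothesis nl : no_leaves T.

Lemma nuh_bd_root : nuh_bd o = h o.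
Proof. by rewrite /nuh_bd eqxx. Qed.

Lemma nuh_bdE x : x != o -> nuh_bd x = nuh f h x.
Proof. by move=> xo; rewrite /nuh_bd (negbTE xo). Qed.

Lemma eigenfun_representable : eigenfun p lam h ->
  exists nu, strong_distribution nu /\ forall x, lc_integral nu (kend f x) (h x).
Proof.
move=> Heig; have HN := eigenfun_strong Heig.
exists (comb_dist nuh_bd); split; first exact: comb_dist_strong.
move=> x; rewrite -(nuh_kcomb_pair f_neq0 ff_neq1 nuh_bd_root nuh_bdE x).
exact (lc_integral_comb_dist nl (abs_sum_child_additive HN) f x).
Qed.

Lemma representable_eigenfun :
  (exists nu, strong_distribution nu /\ forall x, lc_integral nu (kend f x) (h x)) ->
  eigenfun p lam h.
Proof.
case=> nu [Hs Hint]; have [N0 N1] := lc_integral_nuh f_neq0 ff_neq1 nl Hs Hint.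
exact: (strong_eigenfun (N := fun w => nu (bd w)) Hs.2 N0 N1).
Qed.

End Eigenfunctions.

Unset Implicit Arguments.

Theorem theorem3p4 (R : realType) (T : rtree) (p : T -> T -> R)
  (lam : R[i]) (f : T -> T -> R[i]) :
  no_leaves T ->
  nn_stochastic p ->
  (* (i) *)
  (forall x y : T, adj x y -> f x y * f y x != 1) ->
  (* (ii) and (iii), with u(x,x) = sum_{v ~ x} p(x,v) f(v,x) *)
  (forall x : T, exists uxx : R[i],
     [/\ abs_sum (@adj T) x (fun v => (p x v)%:C%C * f v x) uxx,
         uxx != lam
       & forall y, adj x y ->
           lam * f x y = (p x y)%:C%C + (uxx - (p x y)%:C%C * f y x) * f x y]) ->
  forall h : T -> R[i],
    (eigenfun p lam h <->
       exists nu : set (ends T) -> R[i],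
         strong_distribution nu /\ forall x, lc_integral nu (kend f x) (h x))
    /\
    (forall nu : set (ends T) -> R[i],
       strong_distribution nu -> (forall x, lc_integral nu (kend f x) (h x)) ->
       nu setT = h (troot T) /\
       forall x : T, x != troot T -> nu (bd x) = nuh f h x).
Proof.
move=> nl [_ [p_pos _]] ff_neq1 Hu h.
have p_gt0 x y : adj x y -> 0 < p x y by rewrite p_pos.
have [u Hu'] := choice Hu.
have u_abs_sum x : abs_sum (@adj T) x (fun v => (p x v)%:C%C * f v x) (u x).
  by case: (Hu' x).
have u_neq_lam x : u x != lam by case: (Hu' x).
have weight_eq x y : adj x y ->
    lam * f x y = (p x y)%:C%C + (u x - (p x y)%:C%C * f y x) * f x y.
  by case: (Hu' x) => _ _; apply.
split.
  split; first exact: (eigenfun_representable p_gt0 ff_neq1 u_abs_sum u_neq_lam weight_eq nl).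
  exact: (representable_eigenfun p_gt0 ff_neq1 u_abs_sum u_neq_lam weight_eq nl).
move=> nu Hs Hint; rewrite -bd_rootT.
exact: (lc_integral_nuh (f_neq0 p_gt0 weight_eq) ff_neq1 nl Hs Hint).
Qed.
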